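(* Let $m\ge 1$ and let $(a_1,b_1),\dots,(a_m,b_m)$ be pairs of non-negative integers with $(a_k,b_k)\neq(1,0)$ for every $k$. For $n\ge 1$ let $\mathcal{A}_n$ be the rational hyperplane arrangement in $\mathbb{R}^n$ consisting of the hyperplanes $x_i=x_j$ for $1\le i<j\le n$ together with the hyperplanes $x_i=a_kx_j+b_k$ for all $1\le i\neq j\le n$ and $1\le k\le m$. For a prime $q$, let $G_q$ be the simple graph with vertex set $\mathbb{Z}/q\mathbb{Z}=\{0,1,\dots,q-1\}$ in which two distinct vertices $u,v$ are adjacent if and only if $u\equiv a_kv+b_k \pmod q$ or $v\equiv a_ku+b_k\pmod q$ for some $1\le k\le m$. Then for every sufficiently large prime $q$, the number of $n$-element independent sets of $G_q$ equals $\chi_{\mathcal{A}_n}(q)/n!$.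
   Context: For a finite arrangement $\mathcal{A}$ of affine hyperplanes in $\mathbb{R}^n$, the characteristic polynomial is $\chi_{\mathcal{A}}(t)=\sum_{x\in L(\mathcal{A})}\mu(\hat 0,x)\,t^{\dim x}$, where $L(\mathcal{A})$ is the poset of all nonempty intersections of subsets of hyperplanes of $\mathcal{A}$ (including $\hat 0=\mathbb{R}^n$) ordered by reverse inclusion and $\mu$ is its Möbius function; equivalently $\chi_{\mathcal{A}}(t)=\sum_{\mathcal{B}}(-1)^{\#\mathcal{B}}t^{n-\operatorname{rank}(\mathcal{B})}$, the sum over subsets $\mathcal{B}\subseteq\mathcal{A}$ whose hyperplanes have nonempty common intersection, where $\operatorname{rank}(\mathcal{B})$ is the dimension of the span of the normal vectors of the hyperplanes in $\mathcal{B}$. An independent set of a graph is a set of vertices no two of which are adjacent. *)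

From HB Require Import structures.
From mathcomp Require Import all_boot all_order all_algebra.
From Stdlib Require Import ClassicalEpsilon.
Set Implicit Arguments. Unset Strict Implicit. Unset Printing Implicit Defensive.
Import Order.TTheory GRing.Theory Num.Theory.
Local Open Scope ring_scope.

Definition decP (P : Prop) : bool :=
  if excluded_middle_informative P then true else false.

(* An affine hyperplane  {x | sum_j c_j x_j = d}  in Q^n, given by (c, d), c <> 0. *)
Definition hyp (n : nat) : Type := ('rV[rat]_n * rat)%type.

(* Canonical representative of a hyperplane: scale so that the first nonzero
   coefficient of the normal vector is 1 (two pairs with nonzero normals give
   the same hyperplane iff their normal forms coincide). *)
Definition hyp_normalize n (h : hyp n) : hyp n :=
  let k := head 1 [seq x <- [seq h.1 0 j | j <- enum 'I_n] | x != 0] in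
  (k^-1 *: h.1, h.2 / k).

Definition arrangement n (s : seq (hyp n)) : seq (hyp n) :=
  undup (map (@hyp_normalize n) s).

Section Charpoly.
Variables (n : nat) (A : seq (hyp n)).

Definition inter_nonempty (B : {set 'I_(size A)}) : Prop :=
  exists x : 'rV[rat]_n, forall i : 'I_(size A), i \in B ->
    \sum_(j < n) (nth (0, 0) A i).1 0 j * x 0 j = (nth (0, 0) A i).2.

Definition normals_mx (B : {set 'I_(size A)}) : 'M[rat]_(size A, n) :=
  \matrix_(i, j) (if i \in B then (nth (0, 0) A i).1 0 j else 0).

Definition arr_rank (B : {set 'I_(size A)}) : nat := \rank (normals_mx B).

Definition arr_charpoly : {poly rat} :=
  \sum_(B : {set 'I_(size A)} | decP (inter_nonempty B))
     (-1) ^+ #|B| *: 'X^(n - arr_rank B).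
End Charpoly.

Definition unit_vec n (i : 'I_n) : 'rV[rat]_n := delta_mx 0 i.

Definition arrA (m : nat) (a b : 'I_m -> nat) (n : nat) : seq (hyp n) :=
  arrangement
    ([seq (unit_vec p.1 - unit_vec p.2, 0)
          | p : 'I_n * 'I_n <- enum [set: 'I_n * 'I_n] & (p.1 < p.2)%N]
     ++ [seq (unit_vec p.1.1 - (a p.2)%:R *: unit_vec p.1.2, (b p.2)%:R)
          | p : 'I_n * 'I_n * 'I_m <- enum [set: 'I_n * 'I_n * 'I_m] & p.1.1 != p.1.2]).

Definition Gadj (m : nat) (a b : 'I_m -> nat) (q : nat) (u v : 'I_q) : bool :=
  (u != v) &&
  [exists k : 'I_m, (u == (a k * v + b k) %% q :> nat)%N
                    || (v == (a k * u + b k) %% q :> nat)%N].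

Definition independent (m : nat) (a b : 'I_m -> nat) (q : nat) (S : {set 'I_q}) : bool :=
  [forall u in S, forall v in S, ~~ Gadj a b u v].

Definition num_indep (m : nat) (a b : 'I_m -> nat) (q n : nat) : nat :=
  #|[set S : {set 'I_q} | (#|S| == n) && independent a b S]|.

From Pilot Require Import Defs.
From HB Require Import structures.
From mathcomp Require Import all_boot all_order all_algebra ring.
From Stdlib Require Import ClassicalEpsilon.
Import Order.TTheory GRing.Theory Num.Theory.
Set Implicit Arguments. Unset Strict Implicit. Unset Printing Implicit Defensive.
Local Open Scope ring_scope.

(* The finite field method: write the hyperplanes of A_n with integer
   coefficients. For a prime q beyond the nonzero invariant factors of the
   relevant integer matrices (Smith normal form) and beyond the scales relating
   proportional integer equations, reduction modulo q preserves which
   subfamilies of hyperplanes meet and their ranks; a meeting subfamily of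
   rank r then meets in q^(n-r) points of F_q^n, and inclusion-exclusion counts
   the points of F_q^n on no hyperplane as chi(q). Such a point is an injective
   map [n] -> Z/q whose image is independent in G_q, and each independent
   n-set is the image of exactly n! of them. *)

Section FinFieldSolutions.
Variable F : finFieldType.

Lemma card_rowspace n k (K : 'M[F]_(k, n)) :
  #|[set y : 'rV[F]_n | (y <= K)%MS]| = (#|F| ^ \rank K)%N.
Proof.
have -> : [set y : 'rV[F]_n | (y <= K)%MS] =
    [set z *m row_base K | z in [set: 'rV[F]_(\rank K)]].
  apply/setP => y; rewrite inE; apply/idP/imsetP.
    by rewrite -(eq_row_base K) => /submxP [z ->]; exists z.
  by move=> [z _ ->]; rewrite -(eq_row_base K) submxMl.
rewrite card_imset; last exact: row_free_inj (row_base_free K).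
by rewrite cardsT card_mx mul1n.
Qed.

Lemma card_solutions n s (A : 'M[F]_(n, s)) (b : 'rV[F]_s) :
  #|[set x : 'rV[F]_n | x *m A == b]| =
    if (b <= A)%MS then (#|F| ^ (n - \rank A))%N else 0%N.
Proof.
case: submxP => [[x0 ->]| nb].
  have -> : [set x : 'rV[F]_n | x *m A == x0 *m A] =
      [set x0 + y | y in [set y : 'rV[F]_n | (y <= kermx A)%MS]].
    apply/setP => x; rewrite inE; apply/idP/imsetP.
      move/eqP=> e; exists (x - x0); last by rewrite addrC subrK.
      by rewrite inE sub_kermx mulmxBl e subrr.
    move=> [y]; rewrite inE sub_kermx => /eqP y0 ->.
    by rewrite mulmxDl y0 addr0.
  by rewrite card_imset ?card_rowspace ?mxrank_ker //; exact: addrI.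
apply/eqP; rewrite cards_eq0; apply/eqP/setP => x; rewrite !inE.
by apply/negP => /eqP e; apply: nb; exists x.
Qed.

End FinFieldSolutions.

Lemma submx_rank_col_mx (F : fieldType) m1 m2 n (A : 'M[F]_(m1, n)) (B : 'M[F]_(m2, n)) :
  (B <= A)%MS = (\rank (col_mx A B) == \rank A).
Proof.
have := mxrank_leqif_sup (addsmxSl A B).
rewrite addsmx_sub submx_refl /= => [[_ <-]].
by rewrite -addsmxE eq_sym.
Qed.

Lemma map_intmx_unit (F : fieldType) n (R : 'M[int]_n) :
  R \in unitmx -> map_mx (intmul (1 : F)) R \in unitmx.
Proof.
move=> uR; have := mulmxV uR => /(congr1 (map_mx (intmul (1 : F)))).
by rewrite map_mxM map_mx1 => /mulmx1_unit [].
Qed.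

Lemma sorted_dvdz_nth_eq0 (d : seq int) i j :
  sorted dvdz d -> (i <= j)%N -> d`_i = 0 -> d`_j = 0.
Proof.
move=> sd lij di0.
have [jl|jg] := ltnP j (size d); last by rewrite nth_default.
have il : (i < size d)%N by apply: leq_ltn_trans jl.
have := sorted_leq_nth (@dvdz_trans) (@dvdzz) 0 sd; move=> /(_ i j il jl lij).
by rewrite di0 dvd0z => /eqP.
Qed.

Lemma rank_map_Smith (F : fieldType) s n (M : 'M[int]_(s, n)) (L : 'M[int]_s)
    (R : 'M[int]_n) (d : seq int) :
  L \in unitmx -> R \in unitmx -> sorted dvdz d ->
  M = L *m (\matrix_(i, j) (d`_i *+ (i == j :> nat))) *m R ->
  (forall i, (i < find (pred1 (0 : int)) d)%N -> (d`_i)%:~R != 0 :> F) ->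
  \rank (map_mx (intmul (1 : F)) M) = minn n (minn s (find (pred1 (0 : int)) d)).
Proof.
move=> uL uR sd -> nz; set r := find _ d.
have dz i : (r <= i)%N -> d`_i = 0.
  move=> ri; have [rs|sr] := ltnP r (size d); last first.
    by rewrite nth_default // (leq_trans sr ri).
  apply: (sorted_dvdz_nth_eq0 sd ri); apply/eqP.
  by apply: (@nth_find _ 0 (pred1 (0 : int))); rewrite has_find.
pose u := \row_(i < s) (if (i < r)%N then (d`_i)%:~R else 1 : F).
have uu : diag_mx u \in unitmx.
  rewrite unitmxE det_diag unitfE; apply/prodf_neq0 => i _.
  by rewrite mxE; case: ifP => [/nz //|_]; exact: oner_neq0.
have -> : map_mx (intmul (1 : F))
      (L *m (\matrix_(i, j) (d`_i *+ (i == j :> nat))) *m R) =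
    map_mx intr L *m (diag_mx u *m pid_mx r) *m map_mx intr R.
  rewrite !map_mxM; congr (_ *m _ *m _).
  apply/matrixP => i j; rewrite mul_diag_mx !mxE.
  case: (ltnP i r) => ir; first by rewrite andbT rmorphMn mulr_natr.
  by rewrite dz // mul0rn rmorph0 andbF mulr0.
rewrite mxrankMfree; last by rewrite row_free_unit map_intmx_unit.
rewrite eqmxMfull; last by rewrite row_full_unit map_intmx_unit.
rewrite eqmxMfull; last by rewrite row_full_unit.
rewrite -pid_mx_minv -pid_mx_minh rank_pid_mx ?geq_minl //.
by rewrite minnCA geq_minl.
Qed.

Lemma Fp_intr_neq0 q (z : int) : prime q -> z != 0 -> (`|z| < q)%N ->
  (z%:~R : 'F_q) != 0.
Proof.
move=> pq z0 zq.
have natr_neq0 k : (0 < k < q)%N -> (k%:R : 'F_q) != 0.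
  move=> /andP [k0 kq]; rewrite -(dvdn_pcharf (pchar_Fp pq)).
  by apply/negP => /(dvdn_leq k0); rewrite leqNgt kq.
case: z z0 zq => k z0 zq.
  by apply: natr_neq0; rewrite zq andbT lt0n; move: z0; rewrite eqz_nat.
by rewrite NegzE mulrNz oppr_eq0 natr_neq0.
Qed.

Lemma rank_intmx_Fp s n (M : 'M[int]_(s, n)) : exists N, forall q, prime q ->
  (N <= q)%N ->
  \rank (map_mx (intmul (1 : 'F_q)) M) = \rank (map_mx (intmul (1 : rat)) M).
Proof.
have [L uL [R uR [d sd eM]]] := int_Smith_normal_form M.
exists (\sum_(i < size d) absz (nth 0%R d i)).+1 => q pq Nq.
rewrite (rank_map_Smith uL uR sd eM) ?(rank_map_Smith uL uR sd eM) //.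
  by move=> i /(@before_find _ 0) /negbT; rewrite intr_eq0.
move=> i ir; have /(@before_find _ 0) /negbT di := ir.
apply: Fp_intr_neq0 => //; apply: leq_trans Nq; rewrite ltnS.
have il : (i < size d)%N by apply: leq_trans ir (find_size _ _).
by rewrite (bigD1 (Ordinal il)) //= leq_addr.
Qed.

Lemma card_int_solutions_Fp s n (M : 'M[int]_(n, s)) (c : 'rV[int]_s) :
  exists N, forall q, prime q -> (N <= q)%N ->
  #|[set x : 'rV['F_q]_n | x *m map_mx intr M == map_mx intr c]| =
  if (map_mx (intmul (1 : rat)) c <= map_mx (intmul (1 : rat)) M)%MS
  then (q ^ (n - \rank (map_mx (intmul (1 : rat)) M)))%N else 0%N.
Proof.
have [N1 rkM] := rank_intmx_Fp M.
have [N2 rkMc] := rank_intmx_Fp (col_mx M c).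
exists (maxn N1 N2) => q pq; rewrite geq_max => /andP [q1 q2].
rewrite card_solutions card_Fp // !submx_rank_col_mx -!map_col_mx.
by rewrite rkM // rkMc.
Qed.

Lemma inclusion_exclusion (R : comPzRingType) (X I : finType) (C : I -> pred X) :
  (#|[set x | [forall i, ~~ C i x]]|%:R : R) =
  \sum_(B : {set I}) (-1) ^+ #|B| * (#|[set x | [forall i in B, C i x]]|)%:R.
Proof.
have card_natr (P : pred X) : (#|[set x | P x]|%:R : R) = \sum_x (P x)%:R.
  rewrite -sum1_card natr_sum big_mkcond /=; apply: eq_bigr => x _.
  by rewrite inE; case: (P x).
rewrite card_natr.
under eq_bigr => x _.
  have -> : ([forall i, ~~ C i x]%:R : R) = \prod_i (- (C i x)%:R + 1).
    case: (pickP (C^~ x)) => [i ci|nC].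
      rewrite (bigD1 i) //= ci addNr mul0r.
      suff -> : [forall i, ~~ C i x] = false by [].
      by apply/forallP => /(_ i); rewrite ci.
    have -> : [forall i, ~~ C i x] by apply/forallP => i; rewrite nC.
    by rewrite big1 // => i _; rewrite nC oppr0 add0r.
  rewrite bigA_distr.
  over.
rewrite exchange_big /=; apply: eq_bigr => B _.
rewrite card_natr big_distrr /=; apply: eq_bigr => x _.
rewrite (bigID (mem B)) /= [X in _ * X]big1; last by move=> i /negbTE ->.
rewrite mulr1.
under eq_bigr => i iB do rewrite iB -mulN1r.
rewrite big_split /= prodr_const; congr (_ * _).
case: (pickP (fun i => (i \in B) && ~~ C i x)) => [i /andP [iB ci]|nC].
  rewrite (bigD1 i) //= (negbTE ci) mul0r.
  suff -> : [forall i in B, C i x] = false by [].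
  by apply/forall_inP => /(_ i iB); rewrite (negbTE ci).
have -> : [forall i in B, C i x].
  by apply/forall_inP => i iB; apply: contraFT (nC i) => ci; rewrite iB.
by rewrite big1 // => i iB; apply/eqP; move: (nC i); rewrite iB /=; case: (C i x).
Qed.

Lemma decPP (P : Prop) : reflect P (Defs.decP P).
Proof. by rewrite /Defs.decP; case: excluded_middle_informative; constructor. Qed.

Lemma ex_uniform_bound (T : finType) (P : T -> nat -> Prop) :
  (forall t, exists N, forall q, (N <= q)%N -> P t q) ->
  exists N, forall t q, (N <= q)%N -> P t q.
Proof.
move=> bounded.
suff [N HN] : exists N, forall t, t \in enum T -> forall q, (N <= q)%N -> P t q.
  by exists N => t q; apply: HN; rewrite mem_enum.
elim: (enum T) => [|t s [N HN]]; first by exists 0%N.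
have [Nt Ht] := bounded t; exists (maxn Nt N) => u; rewrite inE.
by case/orP => [/eqP ->|us] q; rewrite geq_max => /andP [qt qs]; [apply: Ht | apply: HN].
Qed.

Lemma Fp_natr_eq q (u v : nat) : prime q -> (u < q)%N ->
  ((u%:R : 'F_q) == v%:R) = (u == v %% q)%N.
Proof.
move=> pq uq; apply/eqP/eqP => [e|->]; last by rewrite Fp_nat_mod.
by have := congr1 (@nat_of_ord _) e; rewrite !val_Fp_nat // modn_small.
Qed.

Lemma invmul_eq_cross (k1 k2 u1 u2 : rat) : k1 != 0 -> k2 != 0 ->
  k1^-1 * u1 = k2^-1 * u2 ->
  (numq k2 * denq k1)%:~R * u1 = (numq k1 * denq k2)%:~R * u2.
Proof.
move=> k10 k20 e; rewrite !intrM !numqE.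
have -> : u1 = k1 * (k2^-1 * u2) by rewrite -e mulrA mulfV // mul1r.
by field.
Qed.

Section IntegerHyperplanes.
Variable n : nat.
Implicit Types (h : 'rV[int]_n * int).

Definition ihyp_holds (R : pzRingType) h (x : 'rV[R]_n) : bool :=
  \sum_j x 0 j * (h.1 0 j)%:~R == h.2%:~R.

Lemma ihyp_holds_diff (R : comPzRingType) (x : 'rV[R]_n) i j (c d : int) :
  ihyp_holds (delta_mx 0 i - c *: delta_mx 0 j, d) x =
  (x 0 i - c%:~R * x 0 j == d%:~R).
Proof.
have sum_delta k : \sum_l x 0 l * ((l == k)%:R)%:~R = x 0 k.
  rewrite (bigD1 k) //= [X in _ + X]big1 ?eqxx ?mulr1 ?addr0 // => l lk.
  by rewrite (negbTE lk) mulr0.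
rewrite /ihyp_holds /=; congr (_ == _).
under eq_bigr => l _ do rewrite !mxE eqxx /= intrB intrM mulrBr mulrCA.
by rewrite sumrB -mulr_sumr !sum_delta.
Qed.

Definition ihyp_rat h : hyp n := (map_mx intr h.1, h.2%:~R).

Definition ihyp_scale h : rat :=
  head 1 [seq c <- [seq (ihyp_rat h).1 0 j | j <- enum 'I_n] | c != 0].

Lemma hyp_normalize_ihyp h : hyp_normalize (ihyp_rat h) =
  ((ihyp_scale h)^-1 *: (ihyp_rat h).1, (ihyp_rat h).2 / ihyp_scale h).
Proof. by []. Qed.

Lemma ihyp_scale_neq0 h : ihyp_scale h != 0.
Proof.
rewrite /ihyp_scale; case E: [seq c <- _ | _] => [|k s] //=.
have : k \in [seq c <- [seq (ihyp_rat h).1 0 j | j <- enum 'I_n] | c != 0].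
  by rewrite E mem_head.
by rewrite mem_filter => /andP [].
Qed.

Lemma hyp_normalize_ihyp_eval h (x : 'rV[rat]_n) :
  (\sum_j (hyp_normalize (ihyp_rat h)).1 0 j * x 0 j =
     (hyp_normalize (ihyp_rat h)).2) <-> ihyp_holds h x.
Proof.
rewrite hyp_normalize_ihyp /ihyp_holds /=.
have k0 : (ihyp_scale h)^-1 != 0 by rewrite invr_eq0 ihyp_scale_neq0.
rewrite -(inj_eq (mulfI k0)) mulr_sumr mulrC.
split => [e|/eqP e]; rewrite -e; [apply/eqP|]; apply: eq_bigr => j _;
  rewrite !mxE; ring.
Qed.

(* Numerator and denominator of the normalizing scale are units modulo every
   prime above the height. *)
Definition ihyp_height h : nat :=
  (absz (numq (ihyp_scale h)) + absz (denq (ihyp_scale h)))%N.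

Lemma ihyp_holds_normalize q h1 h2 : prime q ->
  hyp_normalize (ihyp_rat h1) = hyp_normalize (ihyp_rat h2) ->
  (ihyp_height h1 < q)%N -> (ihyp_height h2 < q)%N ->
  ihyp_holds h1 =1 ihyp_holds (R := 'F_q) h2.
Proof.
move=> pq; rewrite !hyp_normalize_ihyp => -[e1 e2] b1 b2 x.
set al := numq (ihyp_scale h2) * denq (ihyp_scale h1).
set be := numq (ihyp_scale h1) * denq (ihyp_scale h2).
have intE (z1 z2 : int) : al%:~R * z1%:~R = be%:~R * z2%:~R :> rat -> al * z1 = be * z2.
  by rewrite -!intrM => /intr_inj.
have E1 j : al * h1.1 0 j = be * h2.1 0 j.
  apply/intE/invmul_eq_cross; rewrite ?ihyp_scale_neq0 //.
  by have := congr1 (fun M : 'rV[rat]_n => M 0 j) e1; rewrite !mxE.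
have E2 : al * h1.2 = be * h2.2.
  apply/intE/invmul_eq_cross; rewrite ?ihyp_scale_neq0 //.
  by rewrite mulrC e2 mulrC.
have unit_parts h : (ihyp_height h < q)%N ->
    (numq (ihyp_scale h))%:~R != 0 :> 'F_q /\ (denq (ihyp_scale h))%:~R != 0 :> 'F_q.
  move=> bh; split; apply: Fp_intr_neq0; rewrite ?numq_eq0 ?denq_neq0 ?ihyp_scale_neq0 //;
    by apply: leq_ltn_trans bh; rewrite ?leq_addr ?leq_addl.
have [n1 d1] := unit_parts _ b1; have [n2 d2] := unit_parts _ b2.
have al0 : al%:~R != 0 :> 'F_q by rewrite intrM mulf_neq0.
have be0 : be%:~R != 0 :> 'F_q by rewrite intrM mulf_neq0.
rewrite /ihyp_holds -(inj_eq (mulfI al0)) -[in RHS](inj_eq (mulfI be0)).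
rewrite !mulr_sumr -!intrM E2; congr (_ == _); apply: eq_bigr => j _.
by rewrite mulrCA -intrM E1 intrM mulrCA.
Qed.

End IntegerHyperplanes.

Section IntegerArrangement.
Variables (n : nat) (s : seq ('rV[int]_n * int)).

Definition int_arrangement : seq (hyp n) := arrangement (map (@ihyp_rat n) s).
Local Notation A := int_arrangement.
Local Notation normalized := (map (@hyp_normalize n) (map (@ihyp_rat n) s)).
Implicit Types (i : 'I_(size A)) (B : {set 'I_(size A)}).


Definition ihyp_rep i : 'rV[int]_n * int :=
  nth (0, 0) s (index (nth (0, 0) A i) normalized).

Lemma ihyp_rep_index i : (index (nth (0, 0)%R A i) normalized < size s)%N.
Proof.
have : nth (0, 0) A i \in normalized by rewrite -mem_undup mem_nth.
by rewrite -index_mem !size_map.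
Qed.

Lemma ihyp_rep_mem i : ihyp_rep i \in s.
Proof. exact/mem_nth/ihyp_rep_index. Qed.

Lemma hyp_normalize_rep i : hyp_normalize (ihyp_rat (ihyp_rep i)) = nth (0, 0) A i.
Proof.
rewrite /ihyp_rep -(nth_map _ (ihyp_rat (0, 0))) ?ihyp_rep_index //
  -(nth_map _ (hyp_normalize (ihyp_rat (0, 0)))) ?size_map ?ihyp_rep_index //.
by rewrite nth_index // -mem_undup mem_nth.
Qed.

Definition rep_normals_mx B : 'M[int]_(n, size A) :=
  \matrix_(j, i) (if i \in B then (ihyp_rep i).1 0 j else 0).

Definition rep_consts B : 'rV[int]_(size A) :=
  \row_i (if i \in B then (ihyp_rep i).2 else 0).

Lemma all_reps_holdsE (R : comPzRingType) B (x : 'rV[R]_n) :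
  [forall i in B, ihyp_holds (ihyp_rep i) x] =
  (x *m map_mx intr (rep_normals_mx B) == map_mx intr (rep_consts B)).
Proof.
have E i : (x *m map_mx intr (rep_normals_mx B)) 0 i =
    if i \in B then \sum_j x 0 j * ((ihyp_rep i).1 0 j)%:~R else 0.
  rewrite mxE; case: ifP => iB; first by apply: eq_bigr => j _; rewrite !mxE iB.
  by rewrite big1 // => j _; rewrite !mxE iB mulr0z mulr0.
apply/forall_inP/eqP => [holds|/rowP e i iB].
  apply/rowP => i; rewrite E !mxE; case: ifP => iB; last by rewrite mulr0z.
  exact/eqP/holds.
by have := e i; rewrite E !mxE iB => /eqP.
Qed.

Lemma inter_nonemptyE B :
  inter_nonempty B <->
  (map_mx (intmul (1 : rat)) (rep_consts B) <= map_mx intr (rep_normals_mx B))%MS.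
Proof.
have evalE i (x : 'rV[rat]_n) :
    (\sum_j (nth (0, 0) A i).1 0 j * x 0 j = (nth (0, 0) A i).2) <->
    ihyp_holds (ihyp_rep i) x by rewrite -hyp_normalize_rep hyp_normalize_ihyp_eval.
split => [[x holds]|/submxP [x e]].
  apply/submxP; exists x; apply/esym/eqP; rewrite -all_reps_holdsE.
  by apply/forall_inP => i /holds /evalE.
exists x => i iB; apply/evalE.
by move: e => /esym /eqP; rewrite -all_reps_holdsE => /forall_inP /(_ i iB).
Qed.

Lemma arr_rankE B :
  arr_rank B = \rank (map_mx (intmul (1 : rat)) (rep_normals_mx B)).
Proof.
rewrite /arr_rank; pose k := \row_(i < size A) (ihyp_scale (ihyp_rep i))^-1.
have -> : normals_mx B = diag_mx k *m (map_mx intr (rep_normals_mx B))^T.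
  apply/matrixP => i j; rewrite mul_diag_mx !mxE -hyp_normalize_rep hyp_normalize_ihyp.
  by case: ifP => iB; rewrite ?mulr0z ?mulr0 // !mxE.
rewrite eqmxMfull ?mxrank_tr //.
rewrite row_full_unit unitmxE det_diag unitfE; apply/prodf_neq0 => i _.
by rewrite mxE invr_eq0 ihyp_scale_neq0.
Qed.

Lemma card_reps_holds_Fp : exists N, forall q, prime q -> (N <= q)%N ->
  forall B : {set 'I_(size A)},
  #|[set x : 'rV['F_q]_n | [forall i in B, ihyp_holds (ihyp_rep i) x]]| =
  if Defs.decP (inter_nonempty B) then (q ^ (n - arr_rank B))%N else 0%N.
Proof.
suff [N HN] : exists N, forall B q, (N <= q)%N -> prime q ->
    #|[set x : 'rV['F_q]_n | [forall i in B, ihyp_holds (ihyp_rep i) x]]| =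
    if Defs.decP (inter_nonempty B) then (q ^ (n - arr_rank B))%N else 0%N.
  by exists N => q pq Nq B; apply: HN.
apply: ex_uniform_bound => B.
have [N HN] := card_int_solutions_Fp (rep_normals_mx B) (rep_consts B).
exists N => q Nq pq; under eq_finset => x do rewrite all_reps_holdsE.
rewrite HN // arr_rankE.
by case: decPP => [/inter_nonemptyE -> | nI] //; case: ifP => // /inter_nonemptyE.
Qed.

Lemma avoid_reps_avoid_all q : prime q ->
  (\sum_(h <- s) ihyp_height h < q)%N -> forall x : 'rV['F_q]_n,
  [forall i, ~~ ihyp_holds (ihyp_rep i) x] = all (fun h => ~~ ihyp_holds h x) s.
Proof.
move=> pq hq x.
apply/forallP/allP => [avoid h hs|avoid i]; last exact/avoid/ihyp_rep_mem.
have iA : (index (hyp_normalize (ihyp_rat h)) A < size A)%N.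
  by rewrite index_mem mem_undup !map_f.
pose i := Ordinal iA.
have ei : nth (0, 0) A i = hyp_normalize (ihyp_rat h) by rewrite nth_index // -index_mem.
have height_lt h' : h' \in s -> (ihyp_height h' < q)%N.
  by move=> h's; apply: leq_ltn_trans hq; rewrite (big_rem h') //= leq_addr.
rewrite -(ihyp_holds_normalize pq _ (height_lt _ (ihyp_rep_mem i)) (height_lt _ hs)).
  exact: avoid.
by rewrite hyp_normalize_rep.
Qed.

Theorem finite_field_method : exists N, forall q, prime q -> (N <= q)%N ->
  (#|[set x : 'rV['F_q]_n | all (fun h => ~~ ihyp_holds h x) s]|%:R : rat) =
  (arr_charpoly A).[q%:R].
Proof.
have [N cardB] := card_reps_holds_Fp.
exists (maxn N (\sum_(h <- s) ihyp_height h).+1) => q pq.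
rewrite geq_max => /andP [qN qh].
under eq_finset => x do rewrite -avoid_reps_avoid_all //.
rewrite (inclusion_exclusion _ (fun i x => ihyp_holds (ihyp_rep i) x)).
rewrite /arr_charpoly horner_sum [RHS]big_mkcond /=.
apply: eq_bigr => B _; rewrite cardB //.
by case: ifP => _; rewrite ?mulr0 // hornerZ hornerXn natrX.
Qed.

End IntegerArrangement.

Lemma card_inj_ffun_image (T : finType) n (S : {set T}) :
  #|[set f : {ffun 'I_n -> T} | injectiveb f && ([set f i | i in 'I_n] == S)]| =
  if #|S| == n then n`! else 0%N.
Proof.
case: eqVneq => [cS|nS]; last first.
  apply/eqP; rewrite cards_eq0; apply/eqP/setP => f; rewrite !inE.
  apply/negP => /andP [/injectiveP finj /eqP imS].
  by move: nS; rewrite -imS card_imset // card_ord eqxx.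
have -> : [set f : {ffun 'I_n -> T} | injectiveb f && ([set f i | i in 'I_n] == S)] =
    [set f in ffun_on S | injectiveb f].
  apply/setP => f; rewrite !inE andbC; case: (injectiveP f) => finj; rewrite ?andbF //.
  rewrite eqEcard card_imset // card_ord cS leqnn !andbT.
  apply/subsetP/forallP => [sub i | fS _ /imsetP [i _ ->] //].
  exact/sub/imset_f.
have := card_inj_ffuns_on 'I_n (mem S); rewrite card_ord cS ffactnn => <-.
by apply: eq_card => f; rewrite !inE.
Qed.

Lemma independent_image m (a b : 'I_m -> nat) q n (f : 'I_n -> 'I_q) :
  [forall i, forall j, ~~ Gadj a b (f i) (f j)] = independent a b [set f i | i in 'I_n].
Proof.
apply/forallP/forall_inP => [indep _ /imsetP [i _ ->]|indep i].
  by apply/forall_inP => _ /imsetP [j _ ->]; exact: (forallP (indep i)).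
by apply/forallP => j; exact: (forall_inP (indep _ (imset_f _ _)) _ (imset_f _ _)).
Qed.

Lemma card_injective_independent m (a b : 'I_m -> nat) q n :
  #|[set f : {ffun 'I_n -> 'I_q} |
      injectiveb f && [forall i, forall j, ~~ Gadj a b (f i) (f j)]]| =
  (n`! * num_indep a b q n)%N.
Proof.
pose image (f : {ffun 'I_n -> 'I_q}) := [set f i | i in 'I_n].
rewrite -sum1_card (partition_big image predT) //=.
rewrite /num_indep -sum1_card big_distrr [RHS]big_mkcond /=.
apply: eq_bigr => S _; rewrite inE.
rewrite (eq_bigl (fun f : {ffun 'I_n -> 'I_q} =>
    (injectiveb f && (image f == S)) && independent a b S)).
  case: (independent a b S); last by rewrite andbF big_pred0 // => f; rewrite andbF.
  rewrite andbT muln1 -(card_inj_ffun_image _ S) -sum1_card.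
  by apply: eq_bigl => f; rewrite inE andbT.
by move=> f; rewrite inE independent_image; case: eqP => [<-|_]; rewrite ?andbT ?andbF.
Qed.

Section ArrangementA.
Variables (m : nat) (a b : 'I_m -> nat) (n : nat).

Definition ihypsA : seq ('rV[int]_n * int) :=
  [seq (delta_mx 0 p.1 - delta_mx 0 p.2, 0)
     | p : 'I_n * 'I_n <- enum [set: 'I_n * 'I_n] & (p.1 < p.2)%N]
  ++ [seq (delta_mx 0 p.1.1 - (a p.2)%:Z *: delta_mx 0 p.1.2, (b p.2)%:Z)
     | p : 'I_n * 'I_n * 'I_m <- enum [set: 'I_n * 'I_n * 'I_m] & p.1.1 != p.1.2].

Lemma arrA_int : arrA a b n = int_arrangement ihypsA.
Proof.
rewrite /arrA /int_arrangement map_cat -!map_comp.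
by congr (arrangement (_ ++ _)); apply: eq_map => p;
  rewrite /= /ihyp_rat /= map_mxB ?map_mxZ !map_delta_mx //= -?pmulrn.
Qed.

Definition ffun_row q (f : {ffun 'I_n -> 'I_q}) : 'rV['F_q]_n := \row_j (f j : nat)%:R.

Lemma avoid_ihypsA q (f : {ffun 'I_n -> 'I_q}) : prime q ->
  all (fun h => ~~ ihyp_holds h (ffun_row f)) ihypsA =
  [forall p : 'I_n * 'I_n, (p.1 < p.2)%N ==> (f p.1 != f p.2)] &&
  [forall p : 'I_n * 'I_n * 'I_m, (p.1.1 != p.1.2) ==>
     (f p.1.1 != (a p.2 * f p.1.2 + b p.2) %% q :> nat)%N].
Proof.
move=> pq.
have diff_holds i j :
    ihyp_holds (delta_mx 0 i - delta_mx 0 j, 0) (ffun_row f) = (f i == f j).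
  rewrite -[delta_mx 0 j]scale1r ihyp_holds_diff !mxE mul1r subr_eq0.
  by rewrite Fp_natr_eq // modn_small.
have affine_holds i j k :
    ihyp_holds (delta_mx 0 i - (a k)%:Z *: delta_mx 0 j, (b k)%:Z) (ffun_row f) =
    (f i == (a k * f j + b k) %% q :> nat)%N.
  rewrite ihyp_holds_diff !mxE -!pmulrn subr_eq -natrM -natrD Fp_natr_eq //.
  by rewrite addnC.
rewrite all_cat !all_map !all_filter; congr andb.
  apply/allP/forallP => [avoid p|avoid p _]; last first.
    by rewrite /= in_setT diff_holds /=; exact: avoid.
  by have := avoid p; rewrite -enumT mem_enum /= in_setT /= diff_holds; apply.
apply/allP/forallP => [avoid p|avoid p _]; last first.
  by rewrite /= in_setT affine_holds /=; exact: avoid.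
by have := avoid p; rewrite -enumT mem_enum /= in_setT /= affine_holds; apply.
Qed.

Lemma injective_independentE q (f : {ffun 'I_n -> 'I_q}) :
  [forall p : 'I_n * 'I_n, (p.1 < p.2)%N ==> (f p.1 != f p.2)] &&
  [forall p : 'I_n * 'I_n * 'I_m, (p.1.1 != p.1.2) ==>
     (f p.1.1 != (a p.2 * f p.1.2 + b p.2) %% q :> nat)%N] =
  injectiveb f && [forall i, forall j, ~~ Gadj a b (f i) (f j)].
Proof.
apply/andP/andP => [[/forallP neq /forallP nonadj]|[/injectiveP finj /forallP indep]].
  have finj : injective f.
    move=> i j fij; apply/eqP/contraT => nij.
    case: (ltngtP i j) => [lij|lji|/val_inj eij]; last by rewrite eij eqxx in nij.
      by have := neq (i, j); rewrite /= lij fij eqxx.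
    by have := neq (j, i); rewrite /= lji fij eqxx.
  split; first exact/injectiveP.
  apply/forallP => i; apply/forallP => j; rewrite /Gadj negb_and negbK.
  case: (eqVneq (f i) (f j)) => //= nfij.
  have nij : i != j by apply: contraNneq nfij => ->.
  apply/existsPn => k; rewrite negb_or.
  have nji : j != i by rewrite eq_sym.
  have := nonadj (i, j, k); have := nonadj (j, i, k).
  by rewrite /= nij nji /= => /negbTE -> /negbTE ->.
split.
  by apply/forallP => -[i j]; apply/implyP; apply: contraTneq => /finj ->; rewrite ltnn.
apply/forallP => -[[i j] k]; apply/implyP => /= nij.
have nfij : f i != f j by apply: contra_neq nij; exact: finj.
move: (forallP (indep i) j); rewrite /Gadj nfij /= => /existsPn /(_ k).
by rewrite negb_or => /andP [].
Qed.

Lemma card_avoid_ihypsA q : prime q ->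
  #|[set x : 'rV['F_q]_n | all (fun h => ~~ ihyp_holds h x) ihypsA]| =
  #|[set f : {ffun 'I_n -> 'I_q} |
      injectiveb f && [forall i, forall j, ~~ Gadj a b (f i) (f j)]]|.
Proof.
move=> pq; have row_inj : injective (@ffun_row q).
  move=> f g /rowP e; apply/ffunP => j; apply/val_inj/eqP.
  by have := e j; rewrite !mxE => /eqP; rewrite Fp_natr_eq // modn_small.
rewrite -(card_imset _ row_inj); apply: eq_card => x; rewrite inE.
apply/idP/imsetP => [avoid|[f]]; last first.
  by rewrite inE -injective_independentE -avoid_ihypsA // => ? ->.
have lt_q (j : 'I_n) : (x ord0 j < q)%N by rewrite -[X in (_ < X)%N](Fp_cast pq) ltn_ord.
pose f := [ffun j => Ordinal (lt_q j)].
have fx : ffun_row f = x by apply/rowP => j; rewrite !mxE ffunE /= natr_Zp.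
by exists f; rewrite // inE -injective_independentE -avoid_ihypsA // fx.
Qed.

End ArrangementA.

Unset Implicit Arguments. Set Strict Implicit. Set Printing Implicit Defensive.

Theorem proposition1p4 (m : nat) (a b : 'I_m -> nat) :
  (0 < m)%N ->
  (forall k : 'I_m, (a k, b k) != (1%N, 0%N)) ->
  forall n : nat, (1 <= n)%N ->
  exists N : nat, forall q : nat, prime q -> (N <= q)%N ->
    ((num_indep a b q n)%:R : rat) =
      (arr_charpoly (arrA a b n)).[q%:R] / (n`!)%:R.
Proof.
move=> _ _ n _.
have [N ffm] := finite_field_method (ihypsA a b n).
exists N => q pq Nq.
have fact_neq0 : (n`!)%:R != 0 :> rat by rewrite pnatr_eq0 -lt0n fact_gt0.
rewrite arrA_int -ffm // card_avoid_ihypsA // card_injective_independent natrM.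
by rewrite mulrAC divff // mul1r.
Qed.
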